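(* Let $f:\mathbb{N}\to\mathbb{R}$ with $f(1)=1$. Assume there exist an integer $N\geq2$, $C>0$ and $\gamma\in\mathbb{R}$ such that $f(n)=0$ for all $2\leq n\leq N$ and $|f(n)|\leq Cn^\gamma$ for all $n>N$. Then $$|f^{-1}(n)|\leq n^{\gamma+\varsigma}, \quad n>N,$$ where $\varsigma>1$ is the unique root of $\zeta(s)=\frac{1}{C}+\sum_{m=1}^{N} m^{-s}$.
   Context: $f^{-1}$ denotes the Dirichlet inverse of $f$: the arithmetic function with $\sum_{d\mid n} f(n/d) f^{-1}(d)=\varepsilon(n)$ for all $n$, where $\varepsilon(1)=1$ and $\varepsilon(n)=0$ for $n\ge2$. $\zeta$ is the Riemann zeta function. *)

From HB Require Import structures.
From mathcomp Require Import all_boot all_order all_algebra.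
From mathcomp Require Import all_classical all_reals all_analysis.
Set Implicit Arguments. Unset Strict Implicit. Unset Printing Implicit Defensive.
Import Order.TTheory GRing.Theory Num.Theory.
Local Open Scope ring_scope.

(* Arithmetic functions are maps nat -> R; only values at n >= 1 matter. *)

Definition dirichlet_inverse (R : realType) (f g : nat -> R) : Prop :=
  forall n : nat, (0 < n)%N ->
    \sum_(d <- divisors n) f (n %/ d)%N * g d = (n == 1%N)%:R.

(* Riemann zeta on reals: zeta(s) = sum_{m >= 1} m^{-s} (limit of partial sums, meaningful for s > 1). *)
Definition zeta (R : realType) (s : R) : R :=
  limn (fun n : nat => \sum_(1 <= m < n) ((m%:R : R) `^ (- s))).

(* Write a = gamma + s.  Since g 1 = 1 and g n = - sum_(d | n, d < n) f (n/d) g d, and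
   sum_(d | n, d < n) |f (n/d)| d^a = n^a * sum_(e | n, e > 1) |f e| e^-a, strong induction
   gives |g n| <= n^a as soon as every divisor sum sum_(e | n, e > 1) |f e| e^-a is at most 1.
   The hypotheses on f bound that sum by C * sum_(m > N) m^-s, which equals 1 exactly when s
   solves zeta s = 1/C + sum_(m <= N) m^-s.  The tail s |-> sum_(m > N) m^-s is locally
   Lipschitz and strictly decreasing on (1, +oo); it is unbounded near 1 because the harmonic
   series diverges, and its value at s + y is at most (N+1)^-y times its value at s, so it
   tends to 0.  The intermediate value theorem then gives exactly one root s > 1. *)

From HB Require Import structures.
From mathcomp Require Import all_boot all_order all_algebra.
From mathcomp Require Import all_classical all_reals all_analysis.
From mathcomp Require Import ring lra.
Import Order.TTheory GRing.Theory Num.Theory.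
Import numFieldNormedType.Exports.
Set Implicit Arguments.
Unset Strict Implicit.
Local Open Scope classical_set_scope.
Local Open Scope ring_scope.

Section PowerInequalities.
Variable R : realType.
Implicit Types (a b x r s t u e : R).

Lemma powR_ge1Dln x r : 0 < x -> 1 + r * ln x <= x `^ r.
Proof. by move=> x0; rewrite /powR gt_eqF // expR_ge1Dx. Qed.

Lemma ltr_powRN x s u : 1 < x -> s < u -> x `^ (- u) < x `^ (- s).
Proof.
move=> x1 su; have x0 : 0 < x by apply: lt_trans x1.
rewrite /powR gt_eqF // ltr_expR ltr_pM2r ?ln_gt0 // ltrN2 //.
Qed.

Lemma subr_powRN_ge a b t : 0 < a <= b -> 0 <= t ->
  t * (b - a) * b `^ (- t - 1) <= a `^ (- t) - b `^ (- t).
Proof.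
move=> /andP[a0 ab] t0; have b0 : 0 < b by apply: lt_le_trans ab.
have ab0 : 0 < a / b by rewrite divr_gt0.
have -> : a `^ (- t) = (a / b) `^ (- t) * b `^ (- t).
  by rewrite -powRM ?ltW // divfK // gt_eqF.
have -> : b `^ (- t - 1) = b `^ (- t) / b.
  by rewrite powRB ?powRr1 ?(ltW b0) // (gt_eqF b0) implybT.
have ln_ab : ln (a / b) <= a / b - 1.
  by have := expR_ge1Dx (ln (a / b)); rewrite lnK ?posrE //; lra.
have Q_ge := powR_ge1Dln (- t) ab0.
have B0 := powR_gt0 (- t) b0.
have -> : t * (b - a) * (b `^ (- t) / b) = t * b `^ (- t) * (1 - a / b).
  by field; rewrite gt_eqF.
move: ln_ab Q_ge B0; set B := b `^ (- t); set Q := (a / b) `^ (- t).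
set r := a / b; set L := ln r => ln_ab Q_ge B0.
have : t * (1 - r) <= Q - 1 by nra.
nra.
Qed.

Lemma subr_powRN_le x e s u : 0 < x -> 0 < e -> s <= u ->
  x `^ (- s) - x `^ (- u) <= (u - s) / e * x `^ (- (s - e)).
Proof.
move=> x0 e0 su.
have -> : x `^ (- u) = x `^ (- s) * x `^ (s - u).
  by rewrite -powRD ?(gt_eqF x0) ?implybT //; congr (_ `^ _); ring.
have -> : x `^ (- (s - e)) = x `^ (- s) * x `^ e.
  by rewrite -powRD ?(gt_eqF x0) ?implybT //; congr (_ `^ _); ring.
have B_ge := powR_ge1Dln (s - u) x0.
have E_ge := powR_ge1Dln e x0.
have A0 := powR_gt0 (- s) x0.
move: B_ge E_ge A0; set A := x `^ (- s); set B := x `^ (s - u); set E := x `^ e.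
set L := ln x => B_ge E_ge A0.
have lnL : (u - s) * L <= (u - s) / e * E.
  rewrite -mulrA ler_wpM2l ?subr_ge0 // ler_pdivlMl //; lra.
have : 1 - B <= (u - s) / e * E by lra.
nra.
Qed.

End PowerInequalities.

Section ZetaTail.
Variable R : realType.
Implicit Types (c s u e : R) (N n : nat).

Definition zeta_tail_partial N s n : R := \sum_(N.+1 <= m < n) (m%:R : R) `^ (- s).

(* [zeta s] is convertible to [zeta_tail 0 s]. *)
Definition zeta_tail N s : R := limn (zeta_tail_partial N s).

Lemma zeta_tail_partial_ge0 N s n : 0 <= zeta_tail_partial N s n.
Proof. by apply: sumr_ge0 => m _; apply: powR_ge0. Qed.

Lemma nondecreasing_zeta_tail_partial N s : nondecreasing_seq (zeta_tail_partial N s).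
Proof.
apply/nondecreasing_seqP => n; rewrite /zeta_tail_partial.
case: (ltnP n N.+1) => [nN|Nn]; last by rewrite big_nat_recr //= lerDl powR_ge0.
by rewrite (big_geq (ltnW nN)) big_geq.
Qed.

Lemma zeta_tail_partial_split N s n : (N < n)%N ->
  zeta_tail_partial 0 s n = zeta_tail_partial 0 s N.+1 + zeta_tail_partial N s n.
Proof. by move=> Nn; rewrite /zeta_tail_partial -big_cat_nat. Qed.

Lemma zeta_tail_partial_le_full N s n : zeta_tail_partial N s n <= zeta_tail_partial 0 s n.
Proof.
case: (ltnP N n) => [Nn|nN].
  by rewrite (zeta_tail_partial_split s Nn) lerDr zeta_tail_partial_ge0.
by rewrite {1}/zeta_tail_partial big_geq ?(leqW nN) // zeta_tail_partial_ge0.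
Qed.

Lemma sum_powRN_succ_le s n : 1 < s -> (s - 1) * \sum_(1 <= k < n) k.+1%:R `^ (- s) <= 1.
Proof.
move=> s1; set t := s - 1; have t0 : 0 <= t by rewrite /t; lra.
have step k : (0 < k)%N -> t * k.+1%:R `^ (- s) <= k%:R `^ (- t) - k.+1%:R `^ (- t).
  move=> k0; have := @subr_powRN_ge R k%:R k.+1%:R t.
  have -> : - t - 1 = - s by rewrite /t; ring.
  by rewrite ltr0n k0 ler_nat leqnSn -natrB // subSnn mulr1; apply.
rewrite mulr_sumr.
apply: (le_trans (ler_sum_nat (G := fun k => k%:R `^ (- t) - k.+1%:R `^ (- t)) _)).
  by move=> k /andP[k0 _]; exact: step.
case: n => [|n]; first by rewrite big_geq.
rewrite (telescope_sumr_eq (fun k => - k%:R `^ (- t))) //; last by move=> k _; rewrite opprK addrC.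
by rewrite powR1 opprK gerDr oppr_le0 powR_ge0.
Qed.

Lemma zeta_tail_partial_ub N s n : 1 < s -> zeta_tail_partial N s n <= 1 + (s - 1)^-1.
Proof.
move=> s1; have s10 : 0 < s - 1 by lra.
apply: (le_trans (zeta_tail_partial_le_full N s n)).
apply: (le_trans (nondecreasing_zeta_tail_partial 0 s (leqW (leqnSn n)))).
rewrite /zeta_tail_partial big_nat_recl // powR1 lerD2l.
by rewrite -(ler_pM2l s10) mulfV ?gt_eqF // sum_powRN_succ_le.
Qed.

Lemma is_cvgn_zeta_tail N s : 1 < s -> cvgn (zeta_tail_partial N s).
Proof.
move=> s1; apply: nondecreasing_is_cvgn; first exact: nondecreasing_zeta_tail_partial.
by exists (1 + (s - 1)^-1) => _ [n _ <-]; apply: zeta_tail_partial_ub.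
Qed.

Lemma zeta_tail_partial_le_lim N s n : 1 < s -> zeta_tail_partial N s n <= zeta_tail N s.
Proof.
move=> s1; apply: nondecreasing_cvgn_le; first exact: nondecreasing_zeta_tail_partial.
exact: is_cvgn_zeta_tail.
Qed.

Lemma zeta_tail_ge0 N s : 1 < s -> 0 <= zeta_tail N s.
Proof.
by move=> s1; apply: le_trans (zeta_tail_partial_le_lim N 0 s1); apply: zeta_tail_partial_ge0.
Qed.

Lemma zeta_split N s : 1 < s -> zeta s = zeta_tail_partial 0 s N.+1 + zeta_tail N s.
Proof.
move=> s1; apply: cvg_lim => //.
have : zeta_tail_partial 0 s N.+1 + zeta_tail_partial N s n @[n --> \oo] -->
    zeta_tail_partial 0 s N.+1 + zeta_tail N s.
  by apply: cvgD; [exact: cvg_cst | exact: is_cvgn_zeta_tail].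
apply: cvg_trans; apply: near_eq_cvg; near=> n.
rewrite -(zeta_tail_partial_split s (_ : N < n)%N) //; near: n; exact: nbhs_infty_gt.
Unshelve. all: by end_near.
Qed.

Lemma zeta_tail_partial_sub_le_lim N s u n : 1 < s -> s <= u ->
  zeta_tail_partial N s n - zeta_tail_partial N u n <= zeta_tail N s - zeta_tail N u.
Proof.
move=> s1 su; have u1 : 1 < u by apply: lt_le_trans su.
have cv : zeta_tail_partial N s n - zeta_tail_partial N u n @[n --> \oo] -->
    zeta_tail N s - zeta_tail N u.
  by apply: cvgB; exact: is_cvgn_zeta_tail.
rewrite -(cvg_lim _ cv) //; apply: nondecreasing_cvgn_le; last exact: cvgP cv.
apply/nondecreasing_seqP => k; rewrite /zeta_tail_partial.
case: (ltnP k N.+1) => [kN|Nk].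
  by rewrite !(big_geq kN) !(big_geq (ltnW kN)).
rewrite !big_nat_recr //= opprD addrACA lerDl subr_ge0.
by apply: ler_powR; rewrite ?ler1n ?lerN2 // (leq_trans _ Nk).
Qed.

Lemma zeta_tail_lt N s u : 1 < s -> s < u -> zeta_tail N u < zeta_tail N s.
Proof.
move=> s1 su; rewrite -subr_gt0.
apply: lt_le_trans (zeta_tail_partial_sub_le_lim N N.+3 s1 (ltW su)).
rewrite /zeta_tail_partial !(@big_ltn _ _ _ N.+1 N.+3) // !big_nat1 opprD addrACA.
apply: ltr_wpDl; first by rewrite subr_ge0 ler_powR ?ler1n ?lerN2 ?ltW.
by rewrite subr_gt0 ltr_powRN // ltr1n.
Qed.

Lemma zeta_tail_le N s u : 1 < s -> s <= u -> zeta_tail N u <= zeta_tail N s.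
Proof.
by move=> s1; rewrite le_eqVlt => /predU1P[->|/(zeta_tail_lt N s1)/ltW].
Qed.

Lemma zeta_tail_sub_le N e s u : 0 < e -> 1 < s - e -> s <= u ->
  zeta_tail N s - zeta_tail N u <= (u - s) / e * zeta_tail N (s - e).
Proof.
move=> e0 se1 su; have s1 : 1 < s by lra.
have u1 : 1 < u by lra.
have cv : zeta_tail_partial N s n - zeta_tail_partial N u n @[n --> \oo] -->
    zeta_tail N s - zeta_tail N u.
  by apply: cvgB; exact: is_cvgn_zeta_tail.
rewrite -(cvg_lim _ cv) //; apply: limr_le; first exact: cvgP cv.
have k0 : 0 <= (u - s) / e by apply: divr_ge0; lra.
apply: nearW => n; apply: (le_trans _ (ler_wpM2l k0 (zeta_tail_partial_le_lim N n se1))).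
rewrite /zeta_tail_partial -sumrB mulr_sumr; apply: ler_sum_nat => m /andP[Nm _].
by apply: subr_powRN_le; rewrite ?ltr0n ?(leq_trans _ Nm).
Qed.

Lemma zeta_tail_lipschitz N a e s u : 1 < a -> 0 < e -> a + e <= s -> a + e <= u ->
  `|zeta_tail N s - zeta_tail N u| <= zeta_tail N a / e * `|s - u|.
Proof.
move=> a1 e0; wlog su : s u / s <= u.
  move=> H aes aeu; case: (leP s u) => [su|/ltW us]; first exact: H.
  by rewrite distrC [`|s - u|]distrC; apply: H.
move=> aes aeu; have s1 : 1 < s by lra.
have k0 : 0 <= (u - s) / e by apply: divr_ge0; lra.
rewrite ger0_norm ?subr_ge0 ?zeta_tail_le // distrC ger0_norm ?subr_ge0 //.
apply: le_trans (zeta_tail_sub_le N e0 _ su) _; first lra.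
have -> : zeta_tail N a / e * (u - s) = (u - s) / e * zeta_tail N a by ring.
by apply: ler_wpM2l => //; apply: zeta_tail_le; lra.
Qed.

Lemma zeta_tail_continuous N x : 1 < x -> {for x, continuous (zeta_tail N)}.
Proof.
move=> x1; set e := (x - 1) / 3; have e0 : 0 < e by rewrite /e; lra.
set K := zeta_tail N (1 + e) / e.
have K0 : 0 <= K by rewrite /K divr_ge0 ?zeta_tail_ge0 ?ltW //; lra.
apply/cvgrPdist_le => eps eps0; apply/nbhs_ballP.
exists (Num.min e (eps / (K + 1))) => [|y]; first by rewrite /= lt_min e0 divr_gt0 //; lra.
rewrite /ball /= lt_min => /andP[xye xyK].
have aey : 1 + e + e <= y by move: xye; rewrite ltr_distlC /e => /andP[+ _]; lra.
have aex : 1 + e + e <= x by rewrite /e; lra.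
apply: le_trans (zeta_tail_lipschitz N _ e0 aex aey) _; first lra.
move: xyK; rewrite -/K ltr_pdivlMr; last lra.
have := normr_ge0 (x - y); nra.
Qed.

Lemma series_harmonicE n : series (@harmonic R) n = zeta_tail_partial 0 1 n.+1.
Proof.
elim: n => [|n IH]; first by rewrite /series /zeta_tail_partial /= !big_geq.
by rewrite seriesSr IH /zeta_tail_partial [in RHS]big_nat_recr //= powR_inv1.
Qed.

Lemma zeta_tail_partial1_unbounded N c : exists n, c < zeta_tail_partial N 1 n.
Proof.
apply: contrapT => /forallNP bounded; apply: (@dvg_harmonic R).
apply: nondecreasing_is_cvgn.
  by apply/nondecreasing_seqP => n; rewrite seriesSr lerDl harmonic_ge0.
exists (zeta_tail_partial 0 1 N.+1 + c) => _ [n _ <-]; rewrite series_harmonicE.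
apply: (le_trans (nondecreasing_zeta_tail_partial 0 1 (_ : n.+1 <= (n + N).+1)%N)).
  by rewrite ltnS leq_addr.
rewrite (zeta_tail_partial_split 1 (leq_addl n N : N < (n + N).+1)%N) lerD2l leNgt.
exact/negP/bounded.
Qed.

Lemma zeta_tail_unbounded N c : exists2 s, 1 < s & c <= zeta_tail N s.
Proof.
have [n cn] := zeta_tail_partial1_unbounded N (2 * c).
have {}cn : 2 * c < zeta_tail_partial N 1 n.+2.
  exact: lt_le_trans cn (nondecreasing_zeta_tail_partial N 1 (leqW (leqnSn n))).
have L0 : 0 < ln (n.+2%:R : R) by rewrite ln_gt0 // ltr1n.
(* This choice of d makes m^-d >= 1/2 for every m <= n + 1. *)
set d := (2 * ln (n.+2%:R : R))^-1.
have d0 : 0 < d by rewrite invr_gt0 mulr_gt0.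
have dL : d * ln (n.+2%:R : R) = 2^-1 by rewrite /d; field; rewrite gt_eqF.
exists (1 + d); first lra.
apply: le_trans (zeta_tail_partial_le_lim N n.+2 _); last lra.
suff : zeta_tail_partial N 1 n.+2 <= 2 * zeta_tail_partial N (1 + d) n.+2 by lra.
rewrite /zeta_tail_partial mulr_sumr; apply: ler_sum_nat => m /andP[Nm mn].
have m0 : 0 < m%:R :> R by rewrite ltr0n (leq_trans _ Nm).
have -> : m%:R `^ (- (1 + d)) = m%:R `^ (- 1) * m%:R `^ (- d).
  by rewrite opprD powRD ?(gt_eqF m0) ?implybT.
have md := powR_ge1Dln (- d) m0.
have dm : d * ln m%:R <= 2^-1.
  rewrite -dL; apply: ler_wpM2l; first exact: ltW.
  by rewrite ler_ln ?posrE ?m0 ?ltr0Sn // ler_nat ltnW.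
have : 2^-1 <= m%:R `^ (- d) by lra.
have : 0 <= m%:R `^ (- 1) :> R by apply: powR_ge0.
nra.
Qed.

Lemma zeta_tail_shift_le N s y : 1 < s -> 0 <= y ->
  zeta_tail N (s + y) <= N.+1%:R `^ (- y) * zeta_tail N s.
Proof.
move=> s1 y0; have sy1 : 1 < s + y by lra.
set K := N.+1%:R `^ (- y).
have cv : K * zeta_tail_partial N s n @[n --> \oo] --> K * zeta_tail N s.
  by apply: cvgMr; exact: is_cvgn_zeta_tail.
rewrite -(cvg_lim _ cv) //; apply: ler_lim; [exact: is_cvgn_zeta_tail | exact: cvgP cv |].
apply: nearW => n; rewrite /zeta_tail_partial mulr_sumr; apply: ler_sum_nat => m /andP[Nm _].
have m0 : 0 < m%:R :> R by rewrite ltr0n (leq_trans _ Nm).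
rewrite opprD powRD ?(gt_eqF m0) ?implybT // [leRHS]mulrC ler_pM2l ?powR_gt0 //.
rewrite /K /powR !gt_eqF ?m0 ?ltr0Sn // ler_expR.
have : ln N.+1%:R <= ln m%:R :> R by rewrite ler_ln ?posrE ?m0 ?ltr0Sn // ler_nat.
nra.
Qed.

Lemma zeta_tail_small N c : (0 < N)%N -> 0 < c -> exists2 s, 1 < s & zeta_tail N s <= c.
Proof.
move=> N0 c0; set Z := zeta_tail N 2; have Z0 : 0 <= Z by apply: zeta_tail_ge0; lra.
have L0 : 0 < ln (N.+1%:R : R) by rewrite ln_gt0 // ltr1n ltnS.
(* This choice of y makes (N+1)^y >= 1 + y ln (N+1) = 1 + Z/c. *)
set y := Z / (c * ln (N.+1%:R : R)).
have y0 : 0 <= y by rewrite /y divr_ge0 // ltW // mulr_gt0.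
have yL : y * ln (N.+1%:R : R) = Z / c by rewrite /y; field; rewrite !gt_eqF.
exists (2 + y); first lra.
apply: le_trans (zeta_tail_shift_le N _ y0) _; first lra.
have P0 : 0 < (N.+1%:R : R) `^ y by rewrite powR_gt0 // ltr0n.
have := powR_ge1Dln y (ltr0Sn R N); rewrite yL => Py.
rewrite powRN mulrC ler_pdivrMr //.
have : c * (Z / c) = Z by field; rewrite gt_eqF.
rewrite -/Z; nra.
Qed.

Lemma zeta_tail_eq_uniq N c : (0 < N)%N -> 0 < c -> exists! s, 1 < s /\ zeta_tail N s = c.
Proof.
move=> N0 c0; have [a a1 ca] := zeta_tail_unbounded N c.
have [b b1 bc] := zeta_tail_small N0 c0.
have ab : a <= b by rewrite leNgt; apply/negP => /(zeta_tail_lt N b1); lra.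
have cont : {within `[a, b], continuous (zeta_tail N)}.
  apply: continuous_subspace_itv => x; rewrite in_itv /= => /andP[ax _].
  by apply: zeta_tail_continuous; lra.
have [|s] := @IVT R _ a b c ab cont; first by rewrite ge_min le_max bc ca orbT.
rewrite in_itv /= => /andP[a_le_s _] zs; have s1 : 1 < s by lra.
exists s; split=> // t [t1 zt].
case: (ltgtP s t) => // st.
  by have := zeta_tail_lt N s1 st; lra.
by have := zeta_tail_lt N t1 st; lra.
Qed.

End ZetaTail.

Lemma perm_divisors_compl n :
  (0 < n)%N -> perm_eq [seq n %/ d | d <- divisors n]%N (divisors n).
Proof.
move=> n0; have divK : {in divisors n, cancel (divn n) (divn n)}.
  by move=> d; rewrite -dvdn_divisors // => dn; rewrite divnA // mulKn.
have div_mem d : d \in divisors n -> (n %/ d)%N \in divisors n.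
  by rewrite -!dvdn_divisors //; apply: dvdn_div.
apply: uniq_perm; rewrite ?(map_inj_in_uniq (can_in_inj divK)) ?divisors_uniq //.
move=> e; apply/mapP/idP => [[d /div_mem + ->] //|en].
by exists (n %/ e)%N; rewrite ?divK ?div_mem.
Qed.

Lemma sum_divisors_le_sum_nat (R : numDomainType) (P : pred nat) (F : nat -> R) n :
  (0 < n)%N -> (forall e, 0 <= F e) ->
  \sum_(e <- divisors n | P e) F e <= \sum_(0 <= e < n.+1 | P e) F e.
Proof.
move=> n0 F0.
have div_iota : perm_eq (divisors n) [seq e <- index_iota 0 n.+1 | e %| n]%N.
  apply: uniq_perm; rewrite ?filter_uniq ?iota_uniq ?divisors_uniq // => e.
  rewrite mem_filter mem_index_iota -dvdn_divisors //.
  by case: (boolP (e %| n)%N) => //= /(dvdn_leq n0); rewrite ltnS => ->.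
rewrite (perm_big _ div_iota) big_filter_cond big_mkcond [leRHS]big_mkcond.
by apply: ler_sum => e _; case: (e %| n)%N; case: (P e).
Qed.

Lemma dirichlet_inverse_norm_le (R : realType) (f g : nat -> R) (a : R) :
  f 1%N = 1 -> dirichlet_inverse f g ->
  (forall n, (0 < n)%N -> \sum_(e <- divisors n | (1 < e)%N) `|f e| * e%:R `^ (- a) <= 1) ->
  forall n, (0 < n)%N -> `|g n| <= n%:R `^ a.
Proof.
move=> f1 fg f_weight; elim/ltn_ind => n IH n0.
have [->|n1] := eqVneq n 1%N.
  have := fg 1%N isT; rewrite (_ : divisors 1 = [:: 1%N]) // big_seq1 divnn /= f1 mul1r => ->.
  by rewrite normr1 powR1.
have gn : g n = - \sum_(d <- divisors n | d != n) f (n %/ d)%N * g d.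
  have := fg n n0; rewrite (bigD1_seq n) ?divisors_id ?divisors_uniq //= divnn n0 f1 mul1r.
  by rewrite (negbTE n1) => /eqP; rewrite addr_eq0 => /eqP.
have compl d : d \in divisors n ->
    [/\ (0 < n %/ d)%N, (n %/ d * d)%N = n & (1 < n %/ d)%N = (d != n)].
  rewrite -dvdn_divisors // => dn; have d0 : (0 < d)%N := dvdn_gt0 n0 dn.
  have q0 : (0 < n %/ d)%N by rewrite divn_gt0 // dvdn_leq.
  split=> //; first exact: divnK.
  apply/idP/idP => [|dNn]; first by apply: contraL => /eqP ->; rewrite divnn n0.
  rewrite ltn_neqAle q0 andbT eq_sym; apply: contra dNn => /eqP q1.
  by rewrite -(divnK dn) q1 mul1n.
rewrite gn normrN; apply: (le_trans (ler_norm_sum _ _ _)).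
apply: (@le_trans _ _ (\sum_(d <- divisors n | d != n) `|f (n %/ d)%N| * d%:R `^ a)).
  rewrite big_seq_cond [leRHS]big_seq_cond; apply: ler_sum => d /andP[dn dNn].
  have [q0 qd _] := compl d dn.
  rewrite normrM ler_wpM2l // IH //; last by rewrite -qd muln_gt0 in n0; case/andP: n0.
  by rewrite ltn_neqAle dNn -qd leq_pmull.
have -> : \sum_(d <- divisors n | d != n) `|f (n %/ d)%N| * d%:R `^ a =
    n%:R `^ a * \sum_(d <- divisors n | (1 < n %/ d)%N) `|f (n %/ d)%N| * (n %/ d)%:R `^ (- a).
  rewrite mulr_sumr big_seq_cond [RHS]big_seq_cond; apply: eq_big => [d|d /andP[dn _]].
    by case dn: (d \in divisors n) => //=; have [_ _ ->] := compl d dn.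
  have [q0 qd _] := compl d dn.
  rewrite -{2}qd natrM powRM // mulrCA; congr (_ * _).
  have qa0 : (n %/ d)%:R `^ a != 0 :> R by rewrite gt_eqF // powR_gt0 // ltr0n.
  by rewrite mulrAC powRN mulfV // mul1r.
rewrite -(big_map (divn n) (fun e => 1 < e)%N (fun e => `|f e| * e%:R `^ (- a))).
by rewrite (perm_big _ (perm_divisors_compl n0)) ler_piMr ?powR_ge0 ?f_weight.
Qed.

Lemma divisor_weight_le_zeta_tail (R : realType) (f : nat -> R) N (C gamma s : R) n :
  (0 < n)%N -> 0 <= C -> 1 < s ->
  (forall e, (2 <= e <= N)%N -> f e = 0) ->
  (forall e, (N < e)%N -> `|f e| <= C * e%:R `^ gamma) ->
  \sum_(e <- divisors n | (1 < e)%N) `|f e| * e%:R `^ (- (gamma + s)) <= C * zeta_tail N s.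
Proof.
move=> n0 C0 s1 f0 fC.
apply: (@le_trans _ _ (\sum_(e <- divisors n | (N < e)%N) C * e%:R `^ (- s))).
  rewrite big_mkcond [leRHS]big_mkcond; apply: ler_sum => e _.
  case: ifP => [e1|_]; last by case: ifP => // _; rewrite mulr_ge0 ?powR_ge0.
  case: ltnP => [Ne|eN]; last by rewrite f0 ?e1 // normr0 mul0r.
  have e0 : 0 < e%:R :> R by rewrite ltr0n ltnW.
  apply: le_trans (ler_wpM2r (powR_ge0 _ _) (fC e Ne)) _.
  by rewrite -mulrA -powRD ?(gt_eqF e0) ?implybT // opprD addrA subrr add0r.
rewrite -mulr_sumr ler_wpM2l //; apply: le_trans (zeta_tail_partial_le_lim N n.+1 s1).
rewrite /zeta_tail_partial (big_nat_widenl _ 0) //.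
by apply: sum_divisors_le_sum_nat => // e; apply: powR_ge0.
Qed.

Theorem proposition3p15 (R : realType) (f g : nat -> R) (N : nat) (C gamma : R) :
  f 1%N = 1 ->
  (2 <= N)%N ->
  0 < C ->
  (forall n : nat, (2 <= n <= N)%N -> f n = 0) ->
  (forall n : nat, (N < n)%N -> `|f n| <= C * (n%:R `^ gamma)) ->
  dirichlet_inverse f g ->
  (exists! s : R, 1 < s /\
     zeta s = C^-1 + \sum_(1 <= m < N.+1) ((m%:R : R) `^ (- s))) /\
  (forall s : R, 1 < s ->
     zeta s = C^-1 + \sum_(1 <= m < N.+1) ((m%:R : R) `^ (- s)) ->
     forall n : nat, (N < n)%N -> `|g n| <= (n%:R : R) `^ (gamma + s)).
Proof.
move=> f1 N2 C0 f0 fC fg; have N0 : (0 < N)%N by apply: leq_trans N2.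
have zetaE s : 1 < s ->
    zeta s = C^-1 + \sum_(1 <= m < N.+1) ((m%:R : R) `^ (- s)) <-> zeta_tail N s = C^-1.
  by move=> s1; rewrite (zeta_split N s1) addrC; split => [/addIr|->].
split.
  have [|s [[s1 zs] s_uniq]] := zeta_tail_eq_uniq N0 (_ : 0 < C^-1); first by rewrite invr_gt0.
  exists s; split => [|t [t1 /(zetaE t t1) zt]]; last exact: s_uniq.
  by split => //; apply/(zetaE s s1).
move=> s s1 /(zetaE s s1) zs n Nn.
apply: (dirichlet_inverse_norm_le f1 fg) => [m m0|]; last exact: leq_ltn_trans Nn.
apply: le_trans (divisor_weight_le_zeta_tail m0 (ltW C0) s1 f0 fC) _.
by rewrite zs mulfV ?gt_eqF.
Qed.
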